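(* Let $0<b<1$, $0<c<1$, and let $(\epsilon_n)_{n\geq1}$ satisfy $0<\epsilon_n<n$, $\epsilon_{n+1}\geq\epsilon_n+\frac{1}{2^{n/2}\ln 2}$ for all $n$, and $\epsilon_n/n\to0$. Put $t_n=2^{1-\epsilon_n/n}$, $a_n=c^{t_n^n}$ and $F_n(z,w)=(z^2+a_nw,\ a_nz)$. Let $\Omega=\{(z,w)\in\mathbb{C}^2:F_n\circ\cdots\circ F_1(z,w)\to0\}$, let $K\subseteq\Omega$ be compact, and set $\delta_n=\max\{|z_n|,|w_n|:(z,w)\in K\}$ where $(z_n,w_n)=F_n\circ\cdots\circ F_1(z,w)$. Suppose that for arbitrarily large $n$ there is an integer $k(n)\geq1$ with $t_{n+k(n)+1}\leq 2^{\frac{k(n)}{n+k(n)+1}}$. Then there exist arbitrarily large $n$ such that $\delta_{n+k}\leq a_{n+k+1}b^k$ for all $k\geq0$. *)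

From Stdlib Require Import Reals List.
From Coquelicot Require Import Coquelicot.
Open Scope R_scope.

Definition tseq (eps : nat -> R) (n : nat) : R := Rpower 2 (1 - eps n / INR n).

Definition aseq (c : R) (eps : nat -> R) (n : nat) : R :=
  Rpower c ((tseq eps n) ^ n).

Definition Fmap (c : R) (eps : nat -> R) (n : nat) (p : C * C) : C * C :=
  (Cplus (Cmult (fst p) (fst p)) (Cmult (RtoC (aseq c eps n)) (snd p)),
   Cmult (RtoC (aseq c eps n)) (fst p)).

Fixpoint orbit (c : R) (eps : nat -> R) (n : nat) (p : C * C) : C * C :=
  match n with
  | O => p
  | S m => Fmap c eps (S m) (orbit c eps m p)
  end.

Definition norm2 (p : C * C) : R := Rmax (Cmod (fst p)) (Cmod (snd p)).

Definition Omega (c : R) (eps : nat -> R) (p : C * C) : Prop :=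
  is_lim_seq (fun n => norm2 (orbit c eps n p)) 0.

Definition compact2 (K : C * C -> Prop) : Prop :=
  forall (I : Type) (U : I -> C * C -> Prop),
    (forall i, open (U i)) ->
    (forall x, K x -> exists i, U i x) ->
    exists l : list I, forall x, K x -> exists i, In i l /\ U i x.

Definition is_delta (c : R) (eps : nat -> R) (K : C * C -> Prop) (n : nat) (d : R) : Prop :=
  (exists p, K p /\ d = norm2 (orbit c eps n p)) /\
  (forall p, K p -> norm2 (orbit c eps n p) <= d).

(* The proof reduces everything to the real recursion
       delta_(m+1) <= delta_m^2 + a_(m+1) delta_m,                      (R)
   which follows from the one-step bound |F_m(q)| <= |q|^2 + a_m |q|.
   1. Topology: the sets {|F_m o ... o F_1| < r} are open, so by compactness
      of K there is a common time after which delta_m <= r with r <= 1 - c,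
      r <= c/2 (the interval [0, r] is invariant because a_m <= c).
   2. Coefficients: a_m = c^(2^(m - eps_m)); the growth condition on eps gives
      2 a_m^2 <= b a_(m+1) for large m, and t_(n+k+1) <= 2^(k/(n+k+1)) gives
      a_(n+k+1) >= c^(2^k) >= (2r)^(2^k).
   3. Recursion (R): from delta_n <= r, either delta drops below the coefficient
      within k steps or it decays like (2r)^(2^j)/2, which also ends below
      a_(n+k+1); once delta_n <= a_(n+1), the contraction of the coefficients
      propagates delta_(n+k) <= a_(n+k+1) b^k. *)

From Stdlib Require Import Reals List Lra Lia.
From Coquelicot Require Import Coquelicot.
Open Scope R_scope.

(* Coquelicot equips C with two uniform structures, as a product space and as an
   absolute-value ring; they have the same neighbourhoods, so limits transfer. *)
Lemma filterlim_C_of_AbsRing {T : Type} (F : (T -> Prop) -> Prop) (f : T -> C) (y : C) :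
  filterlim f F (@locally (AbsRing_UniformSpace C_AbsRing) y) ->
  filterlim f F (@locally C_UniformSpace y).
Proof. intros H P HP. apply H. now apply locally_C. Qed.

Lemma filterlim_AbsRing_of_C {T : Type} (F : (T -> Prop) -> Prop) (f : T -> C) (y : C) :
  filterlim f F (@locally C_UniformSpace y) ->
  filterlim f F (@locally (AbsRing_UniformSpace C_AbsRing) y).
Proof. intros H P HP. apply H. now apply locally_C. Qed.

Lemma continuous_Cmult {U : UniformSpace} (f g : U -> C) (x : U) :
  continuous f x -> continuous g x -> continuous (fun y => Cmult (f y) (g y)) x.
Proof.
  intros Hf Hg. apply filterlim_C_of_AbsRing.
  apply (@continuous_mult U C_AbsRing); apply filterlim_AbsRing_of_C; assumption.
Qed.

Lemma orbit_continuous (c : R) (eps : nat -> R) (m : nat) (q : C * C) :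
  continuous (fun p => fst (orbit c eps m p)) q /\
  continuous (fun p => snd (orbit c eps m p)) q.
Proof.
  induction m as [|m [IH1 IH2]]; simpl.
  - split; [apply continuous_fst | apply continuous_snd].
  - split.
    + apply (@continuous_plus _ C_AbsRing C_NormedModule);
        apply continuous_Cmult; auto; apply continuous_const.
    + apply continuous_Cmult; [apply continuous_const | exact IH1].
Qed.

Lemma open_norm2_sublevel (f : C * C -> C * C) (r : R) :
  (forall q, continuous (fun p => fst (f p)) q /\ continuous (fun p => snd (f p)) q) ->
  open (fun p => norm2 (f p) < r).
Proof.
  intros Hf.
  apply (open_ext (fun p => Cmod (fst (f p)) < r /\ Cmod (snd (f p)) < r)).
  { intros p; unfold norm2; split.
    - intros [H1 H2]; now apply Rmax_lub_lt.
    - intros H; split; eapply Rle_lt_trans; [apply Rmax_l | exact H | apply Rmax_r | exact H]. }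
  assert (Hnorm : forall z : C, continuous Cmod z)
    by (intros z; apply (@filterlim_norm C_AbsRing C_NormedModule)).
  apply open_and; apply (open_comp _ (fun u => u < r)); try apply open_lt; intros q _.
  - apply (continuous_comp (fun p => fst (f p)) Cmod); [apply Hf | apply Hnorm].
  - apply (continuous_comp (fun p => snd (f p)) Cmod); [apply Hf | apply Hnorm].
Qed.

Lemma compact2_bounded_index (K : C * C -> Prop) (U : nat -> C * C -> Prop) :
  compact2 K -> (forall m, open (U m)) -> (forall p, K p -> exists m, U m p) ->
  exists T, forall p, K p -> exists m, (m <= T)%nat /\ U m p.
Proof.
  intros HK HU Hcov. destruct (HK nat U HU Hcov) as [l Hl].
  exists (list_max l). intros p Kp. destruct (Hl p Kp) as [m [Hm Um]].
  exists m. split; [|exact Um].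
  apply (proj1 (Forall_forall _ l) (proj1 (list_max_le l _) (le_n _)) m Hm).
Qed.

Lemma exp_le (x y : R) : x <= y -> exp x <= exp y.
Proof. intros [H|H]; [left; now apply exp_increasing | right; now subst]. Qed.

Lemma ln_neg (x : R) : 0 < x < 1 -> ln x < 0.
Proof. intros Hx. rewrite <- ln_1. apply ln_increasing; lra. Qed.

Lemma ln2_pos : 0 < ln 2.
Proof. rewrite <- ln_1. apply ln_increasing; lra. Qed.

Lemma Rpower2_pos (y : R) : 0 < Rpower 2 y.
Proof. apply exp_pos. Qed.

Lemma Rpower2_affine_lower (y : R) : 1 + y * ln 2 <= Rpower 2 y.
Proof. apply exp_ineq1_le. Qed.

Lemma Rpower_antimono (c x y : R) : 0 < c < 1 -> x <= y -> Rpower c y <= Rpower c x.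
Proof. intros Hc Hxy. apply exp_le. pose proof (ln_neg c Hc). nra. Qed.

Lemma eventually_le_linear (alpha beta : R) : 0 < alpha ->
  exists M : nat, forall m, (M <= m)%nat -> beta <= alpha * INR m.
Proof.
  intros Ha. destruct (Rle_lt_dec (beta / alpha) 0) as [Hq|Hq].
  - exists O. intros m _. pose proof (pos_INR m).
    assert (beta <= 0).
    { apply Rmult_le_reg_r with (/ alpha); [now apply Rinv_0_lt_compat | lra]. }
    nra.
  - destruct (nfloor_ex (beta / alpha) (Rlt_le _ _ Hq)) as [M [_ HM]].
    exists (S M). intros m Hm. apply le_INR in Hm. rewrite S_INR in Hm.
    apply Rmult_le_reg_r with (/ alpha); [now apply Rinv_0_lt_compat|].
    field_simplify; lra.
Qed.

(* For 0 < y <= 1 and z >= y: e^(-z) <= 1/(1+y) <= 1 - y/2. *)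
Lemma one_minus_exp_neg (y z : R) : 0 < y <= 1 -> y <= z -> y / 2 <= 1 - exp (- z).
Proof.
  intros Hy Hyz.
  assert (Hexp : exp (- z) <= / (1 + y)).
  { apply Rle_trans with (exp (- y)); [apply exp_le; lra|].
    rewrite exp_Ropp. apply Rinv_le_contravar; [lra | apply exp_ineq1_le]. }
  assert (Hinv : / (1 + y) <= 1 - y / 2).
  { apply Rmult_le_reg_r with (1 + y); [lra|]. rewrite Rinv_l by lra. nra. }
  lra.
Qed.

(* If e2 >= e1 + 1/(2^(x/2) ln 2) then 2^(x+1-e1) - 2^(x+1-e2) >= 2^(x/2 - e1):
   write 2^(x+1-e2) = 2^(x+1-e1) e^(-z) with z >= 2^(-x/2). *)
Lemma Rpower2_gap (x e1 e2 : R) : 0 <= x ->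
  e2 >= e1 + 1 / (Rpower 2 (x / 2) * ln 2) ->
  Rpower 2 (x / 2 - e1) <= Rpower 2 (x + 1 - e1) - Rpower 2 (x + 1 - e2).
Proof.
  intros Hx Hstep. pose proof ln2_pos as Hl2.
  set (X := Rpower 2 (x / 2)) in *. set (P := Rpower 2 (x / 2 - e1)).
  assert (HX : 1 <= X).
  { rewrite <- (Rpower_O 2) by lra. apply Rle_Rpower; lra. }
  assert (Hy : 0 < / X <= 1).
  { split; [apply Rinv_0_lt_compat; lra|].
    rewrite <- Rinv_1. apply Rinv_le_contravar; lra. }
  set (z := (e2 - e1) * ln 2).
  assert (Hz : / X <= z).
  { assert (Hd : 1 / (X * ln 2) <= e2 - e1) by lra.
    apply Rmult_le_compat_r with (r := ln 2) in Hd; [|lra].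
    replace (1 / (X * ln 2) * ln 2) with (/ X) in Hd by (field; lra). exact Hd. }
  assert (Hsplit : Rpower 2 (x + 1 - e1) = P * X * 2).
  { unfold P, X. replace (x + 1 - e1) with (x / 2 - e1 + x / 2 + 1) by field.
    rewrite !Rpower_plus, Rpower_1 by lra. reflexivity. }
  assert (Hshift : Rpower 2 (x + 1 - e2) = Rpower 2 (x + 1 - e1) * exp (- z)).
  { unfold Rpower at 1 2, z. rewrite <- exp_plus. f_equal. ring. }
  rewrite Hshift, Hsplit.
  pose proof (one_minus_exp_neg (/ X) z Hy Hz) as Hgap.
  assert (HP : 0 < P) by apply Rpower2_pos.
  replace (P * X * 2 - P * X * 2 * exp (- z)) with (P * X * 2 * (1 - exp (- z))) by ring.
  apply Rle_trans with (P * X * 2 * (/ X / 2)).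
  - right. field. lra.
  - apply Rmult_le_compat_l; [nra | exact Hgap].
Qed.

Lemma eventually_le_ratio (eps : nat -> R) (rho : R) : 0 < rho ->
  is_lim_seq (fun n => eps n / INR n) 0 ->
  exists N : nat, forall n, (N <= n)%nat -> (1 <= n)%nat /\ eps n <= rho * INR n.
Proof.
  intros Hrho Hlim. apply is_lim_seq_spec in Hlim.
  destruct (Hlim (mkposreal rho Hrho)) as [N0 HN0]; simpl in HN0.
  exists (S N0). intros n Hn. split; [lia|].
  specialize (HN0 n ltac:(lia)). rewrite Rminus_0_r in HN0.
  apply Rabs_lt_between in HN0. destruct HN0 as [_ HN0].
  assert (Hpos : 0 < INR n) by (apply lt_0_INR; lia).
  apply Rmult_lt_compat_r with (r := INR n) in HN0; [|exact Hpos].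
  replace (eps n / INR n * INR n) with (eps n) in HN0 by (field; lra). lra.
Qed.

Section CoefficientSequence.

Variables (c : R) (eps : nat -> R).
Hypothesis c_bounds : 0 < c < 1.

Lemma tseq_pos (m : nat) : 0 < tseq eps m.
Proof. apply Rpower2_pos. Qed.

Lemma aseq_explicit (m : nat) : (1 <= m)%nat ->
  aseq c eps m = Rpower c (Rpower 2 (INR m - eps m)).
Proof.
  intros Hm. unfold aseq. f_equal.
  assert (Hpos : 0 < INR m) by (apply lt_0_INR; lia).
  rewrite <- Rpower_pow by apply tseq_pos. unfold tseq.
  rewrite Rpower_mult. f_equal. field. lra.
Qed.

Lemma aseq_pos (m : nat) : 0 < aseq c eps m.
Proof. apply exp_pos. Qed.

(* Since t_m >= 1 as long as eps_m < m, every a_m is at most c. *)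
Lemma aseq_le_c (m : nat) : (1 <= m)%nat -> eps m < INR m -> aseq c eps m <= c.
Proof.
  intros Hm He. rewrite aseq_explicit by exact Hm.
  rewrite <- (Rpower_1 c) at 2 by lra. apply Rpower_antimono; [exact c_bounds|].
  rewrite <- (Rpower_O 2) by lra. apply Rle_Rpower; lra.
Qed.

Lemma aseq_lower (m k : nat) : (1 <= m)%nat ->
  tseq eps m <= Rpower 2 (INR k / INR m) -> c ^ (2 ^ k) <= aseq c eps m.
Proof.
  intros Hm Ht. assert (Hpos : 0 < INR m) by (apply lt_0_INR; lia).
  assert (Htm : tseq eps m ^ m <= INR (2 ^ k)).
  { apply Rle_trans with (Rpower 2 (INR k / INR m) ^ m).
    - apply pow_incr. split; [left; apply tseq_pos | exact Ht].
    - rewrite <- Rpower_pow, Rpower_mult by apply Rpower2_pos.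
      replace (INR k / INR m * INR m) with (INR k) by (field; lra).
      rewrite Rpower_pow, pow_INR by lra. right. reflexivity. }
  unfold aseq. rewrite <- Rpower_pow by lra. now apply Rpower_antimono.
Qed.

Variable b : R.
Hypothesis b_pos : 0 < b.

(* The key estimate 2 a_m^2 <= b a_(m+1): the growth condition on eps makes
   log(1/a_(m+1)) smaller than 2 log(1/a_m) by a margin 2^(m/2 - eps_m)*log(1/c),
   which dominates log 2 - log b once eps_m <= m/4 and m is large. *)
Lemma aseq_contracting_step (m : nat) : (1 <= m)%nat ->
  eps m <= INR m / 4 ->
  eps (S m) >= eps m + 1 / (Rpower 2 (INR m / 2) * ln 2) ->
  ln 2 - ln b <= - ln c * (INR m / 4 * ln 2) ->
  2 * aseq c eps m ^ 2 <= b * aseq c eps (S m).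
Proof.
  intros Hm Hsmall Hstep Hlarge.
  rewrite !aseq_explicit by lia. rewrite S_INR.
  set (x := INR m) in *. set (e1 := eps m) in *. set (e2 := eps (S m)) in *.
  assert (Hx : 0 <= x) by apply pos_INR.
  pose proof (Rpower2_gap x e1 e2 Hx Hstep) as Hgap.
  assert (Hmargin : x / 4 * ln 2 <= Rpower 2 (x / 2 - e1)).
  { apply Rle_trans with (Rpower 2 (x / 4)).
    - pose proof (Rpower2_affine_lower (x / 4)). lra.
    - apply Rle_Rpower; lra. }
  assert (Hdouble : 2 * Rpower 2 (x - e1) = Rpower 2 (x + 1 - e1)).
  { replace (x + 1 - e1) with (1 + (x - e1)) by ring.
    rewrite Rpower_plus, Rpower_1 by lra. reflexivity. }
  pose proof (ln_neg c c_bounds) as Hlc.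
  unfold Rpower at 1 3.
  rewrite <- (exp_ln 2) at 1 by lra. rewrite <- (exp_ln b) at 1 by lra.
  rewrite <- exp_plus. simpl. rewrite Rmult_1_r, <- !exp_plus.
  apply exp_le. nra.
Qed.

End CoefficientSequence.

Lemma aseq_eventually_contracting (b c : R) (eps : nat -> R) : 0 < b -> 0 < c < 1 ->
  (forall n : nat, (1 <= n)%nat ->
     eps (S n) >= eps n + 1 / (Rpower 2 (INR n / 2) * ln 2)) ->
  is_lim_seq (fun n => eps n / INR n) 0 ->
  exists M : nat, forall m, (M <= m)%nat -> 2 * aseq c eps m ^ 2 <= b * aseq c eps (S m).
Proof.
  intros Hb Hc Hstep Hlim.
  destruct (eventually_le_ratio eps (/ 4) ltac:(lra) Hlim) as [N1 HN1].
  assert (Hslope : 0 < - ln c * ln 2 / 4) by (pose proof (ln_neg c Hc); pose proof ln2_pos; nra).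
  destruct (eventually_le_linear _ (ln 2 - ln b) Hslope) as [N2 HN2].
  exists (Nat.max N1 N2). intros m Hm.
  destruct (HN1 m ltac:(lia)) as [Hm1 Hsmall].
  specialize (HN2 m ltac:(lia)).
  apply aseq_contracting_step; auto; lra.
Qed.

Section MaximalNormRecursion.

(* An abstract version of the recursion satisfied by the maximal norms:
   u_(m+1) <= u_m^2 + a_(m+1) u_m with u, a >= 0. *)
Variables (u a : nat -> R).
Hypothesis u_nonneg : forall m, 0 <= u m.
Hypothesis a_nonneg : forall m, 0 <= a m.
Hypothesis u_step : forall m, u (S m) <= u m * u m + a (S m) * u m.

Lemma recursion_stays_small (c r : R) (m j : nat) :
  (forall m, a (S m) <= c) -> 0 <= r <= 1 - c -> u m <= r -> (m <= j)%nat -> u j <= r.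
Proof.
  intros Hac Hr Hm Hj. induction Hj as [|j _ IH]; [exact Hm|].
  eapply Rle_trans; [apply u_step|].
  pose proof (u_nonneg j). specialize (Hac j). pose proof (a_nonneg (S j)).
  assert (u j * u j <= r * r) by nra.
  assert (a (S j) * u j <= c * r) by nra. nra.
Qed.

(* Starting from u_n <= r, as long as u stays above a it decays at least like the
   quadratic iteration x_(j+1) = 2 x_j^2, i.e. x_j = (2r)^(2^j) / 2; hence if
   (2r)^(2^k) <= a_(n+k+1), some u_(n+i) with i <= k is below a_(n+i+1). *)
Lemma recursion_reaches_coefficient (r : R) (n k : nat) :
  0 <= r -> u n <= r -> (2 * r) ^ (2 ^ k) <= a (S (n + k)) ->
  exists i, (i <= k)%nat /\ u (n + i)%nat <= a (S (n + i)).
Proof.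
  intros Hr Hn Hk.
  set (x := fun j : nat => (2 * r) ^ (2 ^ j) / 2).
  assert (Hx0 : forall j, 0 <= x j) by (intros j; unfold x; pose proof (pow_le (2 * r) (2 ^ j)); lra).
  assert (HxS : forall j, x (S j) = 2 * x j * x j).
  { intros j. unfold x. rewrite Nat.pow_succ_r', Nat.mul_comm, pow_mult. simpl. field. }
  assert (Hclaim : forall j, (exists i, (i <= j)%nat /\ u (n + i)%nat <= a (S (n + i)))
                          \/ u (n + j)%nat <= x j).
  { induction j as [|j [[i [Hi Hui]] | IH]].
    - right. rewrite Nat.add_0_r. unfold x. simpl. lra.
    - left. exists i. split; [lia | exact Hui].
    - destruct (Rle_lt_dec (u (n + j)%nat) (a (S (n + j)))) as [Hle | Hlt].
      + left. exists j. split; [lia | exact Hle].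
      + right. rewrite Nat.add_succ_r, HxS.
        eapply Rle_trans; [apply u_step|].
        pose proof (u_nonneg (n + j)). nra. }
  destruct (Hclaim k) as [Hex | Hxk]; [exact Hex|].
  exists k. split; [lia|].
  eapply Rle_trans; [exact Hxk|]. unfold x. pose proof (pow_le (2 * r) (2 ^ k)). lra.
Qed.

Lemma recursion_geometric_decay (b : R) (n : nat) : 0 < b < 1 ->
  (forall m, (n < m)%nat -> 2 * a m ^ 2 <= b * a (S m)) ->
  u n <= a (S n) -> forall k, u (n + k)%nat <= a (S (n + k)) * b ^ k.
Proof.
  intros Hb Hcontr Hn k. induction k as [|k IH].
  - rewrite Nat.add_0_r. simpl. lra.
  - rewrite Nat.add_succ_r. eapply Rle_trans; [apply u_step|].
    assert (Hbk : 0 < b ^ k <= 1).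
    { split; [apply pow_lt; lra | rewrite <- (pow1 k); apply pow_incr; lra]. }
    specialize (Hcontr (S (n + k)) ltac:(lia)).
    pose proof (u_nonneg (n + k)). pose proof (a_nonneg (S (n + k))).
    set (am := a (S (n + k))) in *. set (bk := b ^ k) in *.
    assert (Hsq : u (n + k)%nat * u (n + k)%nat <= am * bk * (am * bk)) by nra.
    assert (Hlin : am * u (n + k)%nat <= am * (am * bk)) by nra.
    assert (Hbk2 : am * bk * (am * bk) <= am * am * bk) by nra.
    assert (Hscaled : 2 * am ^ 2 * bk <= b * a (S (S (n + k))) * bk)
      by (apply Rmult_le_compat_r; lra).
    rewrite <- tech_pow_Rmult. fold bk. nra.
Qed.

End MaximalNormRecursion.

Lemma norm2_nonneg (q : C * C) : 0 <= norm2 q.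
Proof. unfold norm2. eapply Rle_trans; [apply Cmod_ge_0 | apply Rmax_l]. Qed.

Lemma orbit_S (c : R) (eps : nat -> R) (m : nat) (p : C * C) :
  orbit c eps (S m) p = Fmap c eps (S m) (orbit c eps m p).
Proof. reflexivity. Qed.

Lemma norm2_Fmap (c : R) (eps : nat -> R) (m : nat) (q : C * C) :
  norm2 (Fmap c eps m q) <= norm2 q * norm2 q + aseq c eps m * norm2 q.
Proof.
  destruct q as [z w]. unfold norm2, Fmap; simpl.
  set (s := Rmax (Cmod z) (Cmod w)). set (am := aseq c eps m).
  assert (Hz : Cmod z <= s) by apply Rmax_l.
  assert (Hw : Cmod w <= s) by apply Rmax_r.
  pose proof (Cmod_ge_0 z). pose proof (Cmod_ge_0 w).
  assert (Ha : 0 < am) by apply exp_pos.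
  assert (HA : Cmod (RtoC am) = am) by (rewrite Cmod_R; apply Rabs_pos_eq; lra).
  apply Rmax_lub.
  - eapply Rle_trans; [apply Cmod_triangle|]. rewrite !Cmod_mult, HA.
    apply Rplus_le_compat; [apply Rmult_le_compat | apply Rmult_le_compat_l]; lra.
  - rewrite Cmod_mult, HA. nra.
Qed.

Section MaximalNorms.

Variables (c : R) (eps : nat -> R) (K : C * C -> Prop) (delta : nat -> R).
Hypothesis c_bounds : 0 < c < 1.
Hypothesis eps_bounds : forall n : nat, (1 <= n)%nat -> 0 < eps n < INR n.
Hypothesis delta_spec : forall n, is_delta c eps K n (delta n).

Lemma aseq_S_le_c (m : nat) : aseq c eps (S m) <= c.
Proof. apply aseq_le_c; [exact c_bounds | lia | apply eps_bounds; lia]. Qed.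

Lemma delta_nonneg (m : nat) : 0 <= delta m.
Proof.
  destruct (delta_spec m) as [[p [_ ->]] _]. apply norm2_nonneg.
Qed.

Lemma delta_step (m : nat) :
  delta (S m) <= delta m * delta m + aseq c eps (S m) * delta m.
Proof.
  destruct (delta_spec (S m)) as [[p [Kp ->]] _].
  destruct (delta_spec m) as [_ Hmax]. specialize (Hmax p Kp).
  rewrite orbit_S. eapply Rle_trans; [apply norm2_Fmap|].
  pose proof (norm2_nonneg (orbit c eps m p)). pose proof (aseq_pos c eps (S m)). nra.
Qed.

(* Compactness of K: a finite subcover of the open sets {|orbit_m| < r} gives a
   common time after which every orbit from K, hence delta, stays below r. *)
Lemma delta_eventually_small (r : R) : compact2 K -> (forall p, K p -> Omega c eps p) ->
  0 < r <= 1 - c -> exists T, forall j, (T <= j)%nat -> delta j <= r.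
Proof.
  intros HK HOmega Hr.
  destruct (compact2_bounded_index K (fun m p => norm2 (orbit c eps m p) < r) HK)
    as [T HT].
  - intros m. apply open_norm2_sublevel, orbit_continuous.
  - intros p Kp. specialize (HOmega p Kp). apply is_lim_seq_spec in HOmega.
    destruct (HOmega (mkposreal r (proj1 Hr))) as [m Hm].
    exists m. specialize (Hm m (le_n _)); simpl in Hm.
    rewrite Rminus_0_r in Hm. eapply Rle_lt_trans; [apply Rle_abs | exact Hm].
  - exists T. intros j Hj.
    destruct (delta_spec j) as [[p [Kp ->]] _].
    destruct (HT p Kp) as [m [HmT Hm]].
    apply (recursion_stays_small (fun m => norm2 (orbit c eps m p)) (aseq c eps)) with c m;
      try lra; try lia.
    + intros i. apply norm2_nonneg.
    + intros i. left. apply aseq_pos.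
    + intros i. rewrite orbit_S. apply norm2_Fmap.
    + exact aseq_S_le_c.
Qed.

End MaximalNorms.

Theorem lemma4p3 (b c : R) (eps : nat -> R) (K : C * C -> Prop) (delta : nat -> R) :
  0 < b < 1 -> 0 < c < 1 ->
  (forall n : nat, (1 <= n)%nat -> 0 < eps n < INR n) ->
  (forall n : nat, (1 <= n)%nat ->
     eps (S n) >= eps n + 1 / (Rpower 2 (INR n / 2) * ln 2)) ->
  is_lim_seq (fun n => eps n / INR n) 0 ->
  compact2 K ->
  (forall p, K p -> Omega c eps p) ->
  (forall n, is_delta c eps K n (delta n)) ->
  (forall N : nat, exists n : nat, (N <= n)%nat /\
     exists k : nat, (1 <= k)%nat /\
       tseq eps (n + k + 1) <= Rpower 2 (INR k / INR (n + k + 1))) ->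
  forall N : nat, exists n : nat, (N <= n)%nat /\
    forall k : nat, delta (n + k)%nat <= aseq c eps (n + k + 1) * b ^ k.
Proof.
  intros Hb Hc Heps Hstep Hlim HK HOmega Hdelta Hk N.
  (* A radius small enough for invariance (r <= 1 - c) and for (2r)^(2^k) <= c^(2^k). *)
  set (r := Rmin (c / 2) (1 - c)).
  assert (Hr : 0 < r <= 1 - c /\ 2 * r <= c).
  { unfold r. pose proof (Rmin_l (c / 2) (1 - c)). pose proof (Rmin_r (c / 2) (1 - c)).
    repeat split; try lra. apply Rmin_glb_lt; lra. }
  destruct (aseq_eventually_contracting b c eps (proj1 Hb) Hc Hstep Hlim) as [M HM].
  destruct (delta_eventually_small c eps K delta Hc Heps Hdelta r HK HOmega (proj1 Hr))
    as [T HT].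
  destruct (Hk (Nat.max N (Nat.max T M))) as [n [Hn [k [_ Htk]]]].
  assert (Hlow : (2 * r) ^ (2 ^ k) <= aseq c eps (S (n + k))).
  { apply Rle_trans with (c ^ (2 ^ k)); [apply pow_incr; lra|].
    replace (S (n + k)) with (n + k + 1)%nat by lia.
    apply aseq_lower; [exact Hc | lia | exact Htk]. }
  (* Within k steps delta falls below the coefficient, then decays geometrically. *)
  pose proof (delta_nonneg c eps K delta Hdelta) as Hnonneg.
  pose proof (delta_step c eps K delta Hdelta) as Hrec.
  destruct (recursion_reaches_coefficient delta (aseq c eps) Hnonneg Hrec r n k
              ltac:(lra) (HT n ltac:(lia)) Hlow) as [i [_ Hi]].
  exists (n + i)%nat. split; [lia|]. intros j. rewrite Nat.add_1_r.
  assert (Ha : forall m, 0 <= aseq c eps m) by (intros m; left; apply aseq_pos).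
  apply (recursion_geometric_decay delta (aseq c eps) Hnonneg Ha Hrec b (n + i) Hb);
    [intros m Hm; apply HM; lia | exact Hi].
Qed.
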